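(* For every finite point set $P$ in general position, the graph $G_\bigtriangledown(P)$ has at most three vertices of degree one.
   Context: A finite point set $P$ in the plane is in general position if no line through two points of $P$ makes an angle of $0^\circ$, $60^\circ$ or $120^\circ$ with the horizontal. A down-triangle is an equilateral triangle with one side parallel to the $x$-axis and the corner opposite to this side below that side. $G_\bigtriangledown(P)$ is the graph with vertex set $P$ in which $p,q$ are adjacent iff some (closed) down-triangle contains $p$ and $q$ and no other point of $P$. *)

From Stdlib Require Import Reals List.
Open Scope R_scope.

Definition point : Type := (R * R)%type.

(* General position: no line through two distinct points of P makes an angle
   of 0, 60 or 120 degrees with the horizontal, i.e. the direction vector
   (dx, dy) is not parallel to (1,0), (1, sqrt 3) or (-1, sqrt 3). *)
Definition general_position (P : list point) : Prop :=
  forall p q, In p P -> In q P -> p <> q ->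
    let dx := fst q - fst p in
    let dy := snd q - snd p in
    dy <> 0 /\ dy <> sqrt 3 * dx /\ dy <> - (sqrt 3 * dx).

(* The closed down-triangle with horizontal top side from (a, t) to (a + s, t),
   side length s > 0, and apex (a + s/2, t - s*sqrt 3/2) below that side. *)
Definition in_down_triangle (a t s : R) (r : point) : Prop :=
  snd r <= t /\
  t - snd r <= sqrt 3 * (fst r - a) /\
  t - snd r <= sqrt 3 * (a + s - fst r).

Definition gdown_adj (P : list point) (p q : point) : Prop :=
  In p P /\ In q P /\ p <> q /\
  exists a t s, 0 < s /\
    in_down_triangle a t s p /\ in_down_triangle a t s q /\
    (forall r, In r P -> in_down_triangle a t s r -> r = p \/ r = q).

Definition gdown_deg_one (P : list point) (p : point) : Prop :=
  exists q, gdown_adj P p q /\ forall r, gdown_adj P p r -> r = q.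

(* Measure every point r in the three "barycentric" coordinates
     h1 r = -2 y,   h2 r = sqrt 3 x + y,   h3 r = - sqrt 3 x + y,
   which sum to zero.  In these coordinates a down-triangle is exactly a set
   { r | c1 <= h1 r, c2 <= h2 r, c3 <= h3 r } with c1 + c2 + c3 < 0, and general
   position says that each coordinate is injective on P.  Hence two points p, q
   are adjacent as soon as the smallest such triangle containing them (the
   thresholds being the coordinatewise minima) contains no other point.

   The key lemma [neighbour_above] shows: if some point of P lies above p in
   coordinate h_i, then p has a neighbour lying above p in h_i.  So a vertex
   of degree one that maximizes none of the coordinates would have a single
   neighbour above it in all three coordinates, impossible since the
   coordinates sum to zero.  Thus every degree-one vertex is the (unique)
   maximizer of one of h1, h2, h3, and there are at most three of them. *)
From Stdlib Require Import Reals List.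
From Stdlib Require Import Lra Lia Classical.
Import ListNotations.
Open Scope R_scope.

Definition injective_on (w : point -> R) (P : list point) : Prop :=
  forall r s, In r P -> In s P -> w r = w s -> r = s.

Definition is_max (w : point -> R) (P : list point) (p : point) : Prop :=
  forall r, In r P -> w r <= w p.

Lemma inj_le_lt w P r s :
  injective_on w P -> In r P -> In s P -> r <> s -> w r <= w s -> w r < w s.
Proof.
  intros I Hr Hs Hrs Hle. destruct (Rle_lt_or_eq_dec _ _ Hle) as [Hlt|E]; auto.
  exfalso; apply Hrs, I; auto.
Qed.

Lemma inj_le_eq w P r s :
  injective_on w P -> In r P -> In s P -> w r <= w s -> w s <= w r -> r = s.
Proof. intros I Hr Hs H1 H2. apply I; auto; lra. Qed.

Lemma max_unique w P x y :
  injective_on w P -> In x P -> In y P -> is_max w P x -> is_max w P y -> x = y.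
Proof. intros I Hx Hy Mx My. apply (inj_le_eq w P); auto. Qed.

Lemma not_max_above w P p :
  ~ is_max w P p -> exists r, In r P /\ w p < w r.
Proof.
  intro N. apply NNPP; intro A. apply N; intros r Hr.
  destruct (Rle_dec (w r) (w p)) as [Le|Gt]; auto.
  exfalso; apply A; exists r; split; auto; lra.
Qed.

Lemma exists_max (P : list point) (S : point -> Prop) (w : point -> R) :
  (exists q, In q P /\ S q) ->
  exists n, In n P /\ S n /\ forall r, In r P -> S r -> w r <= w n.
Proof.
  induction P as [|a P IH]; intros [q [Hq Sq]]; [destruct Hq|].
  destruct (classic (exists q, In q P /\ S q)) as [Ex|NEx].
  - destruct (IH Ex) as [n [Hn [Sn Mn]]].
    destruct (classic (S a /\ w n <= w a)) as [[Sa Ha]|Na].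
    + exists a; repeat split; [now left|assumption|].
      intros r [<-|Hr] Sr; [lra|]. specialize (Mn r Hr Sr); lra.
    + exists n; repeat split; [now right|assumption|].
      intros r [<-|Hr] Sr; auto.
      destruct (Rle_dec (w a) (w n)); auto. exfalso; apply Na; split; auto; lra.
  - destruct Hq as [<-|Hq]; [|exfalso; apply NEx; eauto].
    exists a; repeat split; [now left|assumption|].
    intros r [<-|Hr] Sr; [lra|]. exfalso; apply NEx; eauto.
Qed.

Definition tri_adj (f g k : point -> R) (P : list point) (p q : point) : Prop :=
  In p P /\ In q P /\ p <> q /\
  forall r, In r P -> Rmin (f p) (f q) <= f r -> Rmin (g p) (g q) <= g r ->
     Rmin (k p) (k q) <= k r -> r = p \/ r = q.

Lemma tri_adj_rot f g k P p q : tri_adj f g k P p q -> tri_adj k f g P p q.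
Proof. intros [Hp [Hq [Hpq H]]]. repeat split; auto. Qed.

Section Neighbour.
Variables (f g k : point -> R) (P : list point).
Hypothesis sum0 : forall r, f r + g r + k r = 0.
Hypotheses (inj_f : injective_on f P) (inj_g : injective_on g P)
           (inj_k : injective_on k P).

(* If some point is above p in f, then p has a neighbour above it in f:
   take, among the points above p in f, one with maximal g; if it is below p
   in g it is a neighbour, otherwise a point above p in f and g with maximal k
   is one. *)
Lemma neighbour_above p :
  In p P -> (exists q, In q P /\ f p < f q) ->
  exists n, tri_adj f g k P p n /\ f p < f n.
Proof.
  intros Hp Habove.
  destruct (exists_max P (fun q => f p < f q) g Habove) as [n [Hn [Hfn Mn]]].
  assert (Hnp : n <> p) by (intro E; subst; lra).
  destruct (Rlt_or_le (g n) (g p)) as [Hgn|Hgn].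
  - exists n; split; [|exact Hfn]. repeat split; auto.
    intros r Hr Hfr Hgr _.
    rewrite Rmin_left in Hfr by lra; rewrite Rmin_right in Hgr by lra.
    destruct (classic (r = p)) as [->|Hrp]; [now left|right].
    apply (inj_le_eq g P); auto.
    apply Mn; auto. apply (inj_le_lt f P); auto.
  - assert (Hpn : g p < g n) by (apply (inj_le_lt g P); auto).
    destruct (exists_max P (fun q => f p < f q /\ g p < g q) k)
      as [m [Hm [[Hfm Hgm] Mm]]]; [eauto|].
    assert (Hkm : k m < k p) by (pose proof (sum0 m); pose proof (sum0 p); lra).
    assert (Hmp : m <> p) by (intro E; subst; lra).
    exists m; split; [|exact Hfm]. repeat split; auto.
    intros r Hr Hfr Hgr Hkr.
    rewrite Rmin_left in Hfr, Hgr by lra; rewrite Rmin_right in Hkr by lra.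
    destruct (classic (r = p)) as [->|Hrp]; [now left|right].
    apply (inj_le_eq k P); auto.
    apply Mm; auto; split; apply (inj_le_lt _ P); auto.
Qed.

End Neighbour.

Definition h1 (r : point) : R := -2 * snd r.
Definition h2 (r : point) : R := sqrt 3 * fst r + snd r.
Definition h3 (r : point) : R := - (sqrt 3 * fst r) + snd r.

Lemma h_sum r : h1 r + h2 r + h3 r = 0.
Proof. unfold h1, h2, h3. ring. Qed.

Lemma injective_coords P :
  general_position P ->
  injective_on h1 P /\ injective_on h2 P /\ injective_on h3 P.
Proof.
  intro G. repeat split; intros r s Hr Hs E; apply NNPP; intro Hrs;
  destruct (G r s Hr Hs Hrs) as [A [B C]]; unfold h1, h2, h3 in E;
  [apply A | apply C | apply B]; lra.
Qed.

Lemma down_triangle_coords c1 c2 c3 r :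
  in_down_triangle ((c2 + c1/2)/sqrt 3) (-c1/2) (-(c1+c2+c3)/sqrt 3) r <->
  (c1 <= h1 r /\ c2 <= h2 r /\ c3 <= h3 r).
Proof.
  assert (S3 : sqrt 3 <> 0) by (apply Rgt_not_eq, sqrt_lt_R0; lra).
  assert (E1 : sqrt 3 * (fst r - (c2 + c1/2)/sqrt 3) = sqrt 3 * fst r - (c2 + c1/2))
    by (field; exact S3).
  assert (E2 : sqrt 3 * ((c2 + c1/2)/sqrt 3 + -(c1+c2+c3)/sqrt 3 - fst r)
               = -(c1/2) - c3 - sqrt 3 * fst r) by (field; exact S3).
  unfold in_down_triangle, h1, h2, h3. rewrite E1, E2.
  split; intros [A [B C]]; repeat split; lra.
Qed.

(* The coordinatewise minima of two distinct triples summing to zero have a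
   negative sum, so they define a genuine (positive-size) down-triangle. *)
Lemma sum_mins_neg a1 a2 a3 b1 b2 b3 :
  a1 + a2 + a3 = 0 -> b1 + b2 + b3 = 0 -> a1 <> b1 ->
  Rmin a1 b1 + Rmin a2 b2 + Rmin a3 b3 < 0.
Proof.
  intros Ha Hb Hab. unfold Rmin.
  destruct (Rle_dec a1 b1), (Rle_dec a2 b2), (Rle_dec a3 b3);
  try (destruct (Rle_lt_or_eq_dec a1 b1 ltac:(assumption)) as [|E];
       [|exfalso; apply Hab; exact E]); lra.
Qed.

Lemma tri_adj_gdown P p q :
  general_position P -> tri_adj h1 h2 h3 P p q -> gdown_adj P p q.
Proof.
  intros G [Hp [Hq [Hpq Hempty]]].
  destruct (injective_coords P G) as [I1 _].
  set (c1 := Rmin (h1 p) (h1 q)); set (c2 := Rmin (h2 p) (h2 q));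
  set (c3 := Rmin (h3 p) (h3 q)).
  assert (Hneg : c1 + c2 + c3 < 0).
  { apply sum_mins_neg; try apply h_sum. intro E. exact (Hpq (I1 p q Hp Hq E)). }
  repeat split; auto.
  exists ((c2 + c1/2)/sqrt 3), (-c1/2), (-(c1+c2+c3)/sqrt 3).
  split; [|split; [|split]].
  - unfold Rdiv; apply Rmult_lt_0_compat;
      [lra | apply Rinv_0_lt_compat, sqrt_lt_R0; lra].
  - apply down_triangle_coords; repeat split; apply Rmin_l.
  - apply down_triangle_coords; repeat split; apply Rmin_r.
  - intros r Hr Hin. apply down_triangle_coords in Hin as [A [B C]].
    apply Hempty; auto.
Qed.

Lemma deg_one_is_max P p :
  general_position P -> In p P -> gdown_deg_one P p ->
  is_max h1 P p \/ is_max h2 P p \/ is_max h3 P p.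
Proof.
  intros G Hp [q [_ Huniq]].
  destruct (injective_coords P G) as [I1 [I2 I3]].
  destruct (classic (is_max h1 P p)) as [M1|A1]; [now left|].
  destruct (classic (is_max h2 P p)) as [M2|A2]; [now right; left|].
  destruct (classic (is_max h3 P p)) as [M3|A3]; [now right; right|].
  exfalso.
  destruct (neighbour_above h1 h2 h3 P h_sum I1 I2 I3 p Hp (not_max_above _ _ _ A1))
    as [n1 [T1 L1]].
  destruct (neighbour_above h2 h3 h1 P ltac:(intro r; pose proof (h_sum r); lra)
              I2 I3 I1 p Hp (not_max_above _ _ _ A2)) as [n2 [T2 L2]].
  destruct (neighbour_above h3 h1 h2 P ltac:(intro r; pose proof (h_sum r); lra)
              I3 I1 I2 p Hp (not_max_above _ _ _ A3)) as [n3 [T3 L3]].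
  assert (n1 = q) by (apply Huniq, tri_adj_gdown; auto).
  assert (n2 = q) by (apply Huniq, tri_adj_gdown, tri_adj_rot; auto).
  assert (n3 = q) by (apply Huniq, tri_adj_gdown, tri_adj_rot, tri_adj_rot; auto).
  subst. pose proof (h_sum p); pose proof (h_sum q). lra.
Qed.

Theorem lemma3 (P : list point) :
  NoDup P -> general_position P ->
  forall L : list point, NoDup L ->
    (forall p, In p L -> In p P /\ gdown_deg_one P p) ->
    (length L <= 3)%nat.
Proof.
  intros _ G L NDL HL.
  destruct L as [|x0 L0]; [simpl; lia|].
  destruct (HL x0 (in_eq _ _)) as [Hx0 _].
  destruct (injective_coords P G) as [I1 [I2 I3]].
  destruct (exists_max P (fun _ => True) h1) as [m1 [Hm1 [_ M1]]]; [eauto|].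
  destruct (exists_max P (fun _ => True) h2) as [m2 [Hm2 [_ M2]]]; [eauto|].
  destruct (exists_max P (fun _ => True) h3) as [m3 [Hm3 [_ M3]]]; [eauto|].
  change 3%nat with (length [m1; m2; m3]).
  apply NoDup_incl_length; [exact NDL|].
  intros x Hx. destruct (HL x Hx) as [HxP Hdeg].
  destruct (deg_one_is_max P x G HxP Hdeg) as [Mx|[Mx|Mx]].
  - left; apply (max_unique h1 P); auto; intros r Hr; auto.
  - right; left; apply (max_unique h2 P); auto; intros r Hr; auto.
  - right; right; left; apply (max_unique h3 P); auto; intros r Hr; auto.
Qed.
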